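(* Let $p$ be a prime and $q$ a power of $p$. Let $s,b$ be integers with $1\le s\le b<q$, let $L=\{b-s+1,b-s+2,\ldots,b\}$, and assume $p\nmid\binom{b}{s}$. If $\mathcal{F}\subseteq 2^{[n]}$ is $q$-modular $L$-differencing Sperner, then $$|\mathcal{F}|\le\sum_{i=0}^{s}\binom{n-1}{i}.$$
   Context: $[n]=\{1,\ldots,n\}$ and $2^{[n]}$ is the family of all subsets of $[n]$. For a positive integer $m$ and $L\subseteq\mathbb{Z}$, write $r\in L\pmod m$ if $r\equiv \ell\pmod m$ for some $\ell\in L$. For $L\subseteq[q-1]$, a family $\mathcal{F}\subseteq 2^{[n]}$ is $q$-modular $L$-differencing Sperner if $|A\setminus B|\in L\pmod q$ for all distinct $A,B\in\mathcal{F}$. *)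

From mathcomp Require Import all_boot.
Set Implicit Arguments. Unset Strict Implicit. Unset Printing Implicit Defensive.

Definition in_mod (m : nat) (L : seq nat) (r : nat) : Prop :=
  exists2 l, l \in L & r = l %[mod m].

Definition modular_L_diff_sperner (n q : nat) (L : seq nat)
  (F : {set {set 'I_n}}) : Prop :=
  forall A B, A \in F -> B \in F -> A != B -> in_mod q L #|A :\: B|.

From mathcomp Require Import all_boot all_algebra zify.
Set Implicit Arguments. Unset Strict Implicit. Unset Printing Implicit Defensive.
Import GRing.Theory.

(* Fix a point x0 of [n] and put m = b + q n.  To A in F attach the function on
   sets B given by C(m - |A \ B|, s) when x0 is not in A and by C(m - |B \ A|, s)
   when x0 is in A.  Modulo p the binomial C(., s) is q-periodic since s < q, so
   this function is C(b, s) <> 0 at B = A and vanishes at every other B of F,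
   because the set difference involved lies in L modulo q.  Over F_p each of these
   functions is a combination of the incidence functions B |-> [U \subset B] with
   U a subset of [n] \ {x0} of size at most s: expand against A when x0 is not in
   A, and, by inclusion-exclusion, against the complement of A when it is.  The
   resulting invertible diagonal matrix therefore factors through a space of
   dimension sum_(i <= s) C(n - 1, i). *)


Section SmallSubsets.
Variable T : finType.

Definition small_subsets (s : nat) (K : {set T}) : {set {set T}} :=
  [set U : {set T} | (U \subset K) && (#|U| <= s)].

Lemma sum_small_subsets_card (V : nmodType) s (K : {set T}) (f : nat -> V) :
  (\sum_(U in small_subsets s K) f #|U| = \sum_(i < s.+1) f i *+ 'C(#|K|, i))%R.
Proof.
rewrite (partition_big (fun U : {set T} => inord #|U| : 'I_s.+1) predT) //=.
apply: eq_bigr => i _; rewrite -cards_draws -sumr_const.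
apply: eq_big => [U|U].
  rewrite !inE -andbA; apply: andb_id2l => _.
  apply/andP/eqP => [[Us /eqP <-]|Ui]; first by rewrite inordK.
  by rewrite Ui -ltnS ltn_ord; split=> //; apply/eqP/val_inj; rewrite /= inordK.
by rewrite inE => /andP[/andP[_ Us] Ui]; rewrite -(eqP Ui) inordK.
Qed.

Lemma card_small_subsets s (K : {set T}) :
  #|small_subsets s K| = \sum_(i < s.+1) 'C(#|K|, i).
Proof.
rewrite -sum1_card (sum_small_subsets_card s K (fun=> 1%N)).
by apply: eq_bigr => i _; rewrite natrE.
Qed.

Local Open Scope ring_scope.

Lemma natr_disjoint_inclusion_exclusion (R : pzRingType) (S B : {set T}) :
  [disjoint S & B]%:R = \sum_(U : {set T} | U \subset S) (-1) ^+ #|U| * (U \subset B)%:R :> R.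
Proof.
have -> : \sum_(U : {set T} | U \subset S) (-1) ^+ #|U| * (U \subset B)%:R =
          \sum_(U in small_subsets #|S :&: B| (S :&: B)) (-1) ^+ #|U| :> R.
  rewrite big_mkcond [RHS]big_mkcond; apply: eq_bigr => U _.
  rewrite !inE subsetI; have [US|] //= := boolP (U \subset S).
  case UB: (U \subset B); rewrite /= ?mulr0 // mulr1 subset_leq_card //.
  by rewrite subsetI US UB.
rewrite sum_small_subsets_card -exprD1n addNr expr0n -setI_eq0 cards_eq0.
by case: (_ == _).
Qed.

Lemma natr_bin_add_cardI (R : pzSemiRingType) (K K' B : {set T}) c s : K \subset K' ->
  'C(c + #|K :&: B|, s)%:R =
  \sum_(U in small_subsets s K') ((U \subset K)%:R * 'C(c, s - #|U|)%:R) * (U \subset B)%:R :> R.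
Proof.
move=> KK'; transitivity (\sum_(U in small_subsets s (K :&: B)) 'C(c, s - #|U|)%:R : R).
  rewrite (sum_small_subsets_card s _ (fun i => 'C(c, s - i)%:R)) addnC.
  rewrite -binomial.Vandermonde natr_sum; apply: eq_bigr => i _.
  by rewrite mulnC natrM mulr_natr.
rewrite big_mkcond [RHS]big_mkcond; apply: eq_bigr => U _.
rewrite !inE subsetI; have [UK|] //= := boolP (U \subset K).
  rewrite (subset_trans UK KK') /=.
  by case: (U \subset B); case: (_ <= _)%N; rewrite /= ?mul1r ?mulr1 ?mulr0.
by rewrite mul0r mul0r; case: (_ && _).
Qed.

Lemma natr_bin_add_cardD (R : pzRingType) (K K' B : {set T}) c s : K \subset K' ->
  'C(c + #|K :\: B|, s)%:R =
  \sum_(U in small_subsets s K')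
     ((-1) ^+ #|U| * \sum_(V in small_subsets s K | U \subset V) 'C(c, s - #|V|)%:R)
     * (U \subset B)%:R :> R.
Proof.
move=> KK'; rewrite setDE (natr_bin_add_cardI _ _ _ _ (subxx K)).
transitivity (\sum_(V in small_subsets s K) \sum_(U : {set T} | U \subset V)
    'C(c, s - #|V|)%:R * ((-1) ^+ #|U| * (U \subset B)%:R) : R).
  apply: eq_bigr => V; rewrite inE => /andP[VK _].
  by rewrite VK mul1r -disjoints_subset natr_disjoint_inclusion_exclusion mulr_sumr.
rewrite (exchange_big_dep (mem (small_subsets s K'))) /=; last first.
  move=> V U; rewrite !inE => /andP[VK Vs] UV.
  by rewrite (subset_trans UV (subset_trans VK KK')) (leq_trans (subset_leq_card UV)).
apply: eq_bigr => U _; rewrite mulr_sumr mulr_suml; apply: eq_bigr => V _.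
by rewrite mulrA (commrX _ (commrN1 _)).
Qed.

End SmallSubsets.

Lemma prime_dvd_bin_pexp p k i : prime p -> 0 < i < p ^ k -> p %| 'C(p ^ k, i).
Proof.
move=> p_pr /andP[i_gt0 i_lt_q]; apply/negPn/negP => p_ndvd.
have q_coprime : coprime (p ^ k) 'C(p ^ k, i).
  by apply: coprimeXl; rewrite prime_coprime.
have : p ^ k %| i * 'C(p ^ k, i).
  by rewrite -(prednK i_gt0) -mul_bin_diag dvdn_mulr.
by rewrite Gauss_dvdl // => /(dvdn_leq i_gt0); rewrite leqNgt i_lt_q.
Qed.

Section PcharBinomial.
Local Open Scope ring_scope.
Variables (R : nzRingType) (p : nat).
Hypothesis pcharRp : p \in [pchar R].

Lemma natr_bin_addn_mul_pexp k a t s : (s < p ^ k)%N ->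
  'C(a + p ^ k * t, s)%:R = 'C(a, s)%:R :> R.
Proof.
move=> s_lt_q; elim: t => [|t IHt]; first by rewrite muln0 addn0.
rewrite mulnS addnCA -binomial.Vandermonde natr_sum big_ord_recl.
rewrite bin0 mul1n subn0 IHt big1 ?addr0 // => j _.
apply/eqP; rewrite -(dvdn_pcharf pcharRp) dvdn_mulr // prime_dvd_bin_pexp //.
  exact: pcharf_prime pcharRp.
by rewrite lift0 /= (leq_ltn_trans (ltn_ord j)).
Qed.

Lemma natr_bin_sub_in_mod_eq0 k b s t r : (s <= b)%N -> (b < p ^ k)%N ->
  in_mod (p ^ k) (iota (b - s + 1) s) r -> (r <= b + p ^ k * t)%N ->
  'C(b + p ^ k * t - r, s)%:R = 0 :> R.
Proof.
move=> sb b_lt_q [l]; rewrite mem_iota => /andP[l_ge l_lt] r_eq_l r_le.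
have l_lt_q : (l < p ^ k)%N by lia.
have q_gt0 : (0 < p ^ k)%N by lia.
move: r_eq_l; rewrite [(l %% _)%N]modn_small // => r_mod.
set d := (r %/ p ^ k)%N.
have r_eq : r = (d * p ^ k + l)%N by rewrite {1}(divn_eq r (p ^ k)) r_mod.
have d_le : (d * p ^ k <= t * p ^ k)%N.
  by rewrite leq_pmul2r // -ltnS -(ltn_pmul2r q_gt0); lia.
have -> : (b + p ^ k * t - r = (b - l) + p ^ k * (t - d))%N by rewrite mulnBr; lia.
by rewrite natr_bin_addn_mul_pexp ?bin_small //; lia.
Qed.

End PcharBinomial.

Section ScalarFactorization.
Local Open Scope ring_scope.
Lemma card_le_of_scalar_factorization (K : fieldType) (I J : finType)
    (X : {set I}) (Y : {set J}) (f : I -> J -> K) (g : J -> I -> K) (c : K) :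
  c != 0 ->
  {in X &, forall i l, \sum_(j in Y) f i j * g j l = c *+ (i == l)} ->
  (#|X| <= #|Y|)%N.
Proof.
move=> c_neq0 fg.
pose M := \matrix_(i < #|X|, j < #|Y|) f (enum_val i) (enum_val j).
pose N := \matrix_(j < #|Y|, l < #|X|) g (enum_val j) (enum_val l).
have MN : M *m N = c%:M.
  apply/matrixP => i l; rewrite !mxE -(inj_eq enum_val_inj) -fg ?enum_valP //.
  by rewrite (big_enum_val (A := [in Y])) /=; apply: eq_bigr => j _; rewrite !mxE.
have := mulmx_max_rank M N.
rewrite MN mxrank_unit // unitmxE det_scalar unitfE expf_neq0 //.
Qed.

End ScalarFactorization.

Lemma subsetC1 (T : finType) (x : T) (A : {set T}) : (A \subset [set~ x]) = (x \notin A).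
Proof. by rewrite -disjoints_subset disjoint_sym disjoints1. Qed.

Section DifferenceBinomial.
Local Open Scope ring_scope.
Variables (T : finType) (x0 : T) (m s : nat).

Definition diff_binomial (A B : {set T}) : nat :=
  'C(m - #|if x0 \in A then B :\: A else A :\: B|, s).

Definition diff_binomial_coef (R : pzRingType) (A U : {set T}) : R :=
  if x0 \in A then
    (-1) ^+ #|U| * \sum_(V in small_subsets s (~: A) | U \subset V) 'C(m - #|~: A|, s - #|V|)%:R
  else (U \subset A)%:R * 'C(m - #|A|, s - #|U|)%:R.

Lemma natr_diff_binomial_expand (R : pzRingType) (A B : {set T}) : (#|T| <= m)%N ->
  (diff_binomial A B)%:R =
  \sum_(U in small_subsets s [set~ x0]) diff_binomial_coef R A U * (U \subset B)%:R.
Proof.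
move=> Tm; rewrite /diff_binomial /diff_binomial_coef.
have Km (K : {set T}) : (#|K| <= m)%N by rewrite (leq_trans (max_card _)).
have [x0A|x0A] := ifP.
  have -> : (m - #|B :\: A| = (m - #|~: A|) + #|~: A :\: B|)%N.
    have := cardsID B (~: A); rewrite setDE setIC -setDE; have := Km (~: A); lia.
  by rewrite (natr_bin_add_cardD _ _ _ _ (_ : ~: A \subset [set~ x0])) // subsetC1 inE x0A.
have -> : (m - #|A :\: B| = (m - #|A|) + #|A :&: B|)%N.
  by have := cardsID B A; have := Km A; lia.
by rewrite (natr_bin_add_cardI _ _ _ _ (_ : A \subset [set~ x0])) // subsetC1 x0A.
Qed.

End DifferenceBinomial.

Theorem mainTheorem1 (p q k s b n : nat) (F : {set {set 'I_n}}) :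
  prime p -> q = p ^ k ->
  1 <= s -> s <= b -> b < q ->
  ~~ (p %| 'C(b, s)) ->
  modular_L_diff_sperner q (iota (b - s + 1) s) F ->
  #|F| <= \sum_(0 <= i < s.+1) 'C(n - 1, i).
Proof.
move=> p_pr -> _ sb bq p_ndvd FL.
case: n F FL => [|n] F FL.
  rewrite big_ltn // bin0 -(cards1 (@set0 'I_0)) (leq_trans _ (leq_addr _ _)) //.
  by apply/subset_leq_card/subsetP => A _; rewrite inE; apply/eqP/setP => -[].
pose x0 : 'I_n.+1 := ord0; pose m := b + p ^ k * n.+1.
have pcharFp := pchar_Fp p_pr.
have m_ge (X : {set 'I_n.+1}) : #|X| <= m.
  rewrite (leq_trans (max_card _)) // card_ord /m (leq_trans _ (leq_addl _ _)) //.
  by rewrite leq_pmull // expn_gt0 prime_gt0.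
have n_eq : n = #|[set~ x0]| by rewrite cardsC1 card_ord.
rewrite big_mkord subn1 [in X in _ <= X]n_eq -card_small_subsets.
apply: (card_le_of_scalar_factorization (f := diff_binomial_coef x0 m s 'F_p)
          (g := fun U B => (U \subset B)%:R%R) (c := 'C(m, s)%:R%R)).
  by rewrite natr_bin_addn_mul_pexp ?(leq_ltn_trans sb) // -(dvdn_pcharf pcharFp).
move=> A B AF BF; rewrite -natr_diff_binomial_expand; last by rewrite -cardsT m_ge.
rewrite /diff_binomial; have [<-|AB] := eqVneq A B.
  by rewrite setDv if_same cards0 subn0.
have BA : B != A by rewrite eq_sym.
by case: ifP => _; apply: natr_bin_sub_in_mod_eq0; rewrite ?m_ge //; exact: FL.
Qed.
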